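(* Fix an integer $r\ge1$ and let $I_r(y)=\sup_{\xi\in\mathbb{R}}\left(y\xi-\varphi^r(\xi)\right)$ for $y\in[0,2^{-r}]$. Then: (1) as $\eta\to0^+$, \[ I_r(\eta)=2\eta\log\left(4^r\eta\sqrt{\Psi^r(0)\prod_{k=1}^{r}\Psi^k(0)}\right)-\log\Psi^r(0)-2\eta+O(\eta^2); \] (2) as $\eta\to0^+$, \[ I_r\left(\frac{1}{2^r}-\eta\right)=2^r\eta\log\left(2^{\,r-1+2^{1-r}}\eta\right)+(2-2^{1-r})\log 2-2^r\eta+O(\eta^2). \] In particular $I_r(0)=-\log\Psi^r(0)$ and $I_r(2^{-r})=(2-2^{1-r})\log 2$.
   Context: $\varphi(\xi)=\frac{\xi}{4}+\log\cosh\frac{\xi}{4}$ for $\xi\in\mathbb{R}$, and $\varphi^r$ is its $r$-fold composition. For $X\in[0,\infty)$, $\Psi(X)=\frac{\sqrt{X}+1}{2}$, and $\Psi^k$ denotes the $k$-fold composition of $\Psi$. ($I_r$ is the rate function in the large deviation principle for $S_{r+1,n}/n$, the normalized number of Strahler-order-$(r+1)$ branches in a uniformly random planar full binary tree with $n$ leaves.) *)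

From Stdlib Require Import Reals Lra Classical ClassicalEpsilon.
Open Scope R_scope.

Definition phi (xi : R) : R := xi / 4 + ln (cosh (xi / 4)).

Definition Psi (X : R) : R := (sqrt X + 1) / 2.

Fixpoint iter_fun (k : nat) (f : R -> R) (x : R) : R :=
  match k with
  | O => x
  | S k' => f (iter_fun k' f x)
  end.

Fixpoint prod_Psi (n : nat) : R :=
  match n with
  | O => 1
  | S n' => prod_Psi n' * iter_fun (S n') Psi 0
  end.

(* Supremum of a set of reals (the least upper bound when the set is
   nonempty and bounded above; default value 0 otherwise). *)
Definition Rsup (S : R -> Prop) : R :=
  match excluded_middle_informative (bound S /\ exists x, S x) with
  | left h => proj1_sig (completeness S (proj1 h) (proj2 h))
  | right _ => 0
  end.

Definition I_rate (r : nat) (y : R) : R :=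
  Rsup (fun z => exists xi : R, z = y * xi - iter_fun r phi xi).

(* Since phi(xi) = ln Psi(e^xi), the objective y xi - phi^r(xi) is, after the
   substitution u = e^(xi/2) near y = 0, resp. u = e^(-xi/2^r) near y = 2^-r,
   a function  alpha ln u - ln h(u)  of u > 0, with
     near 0     :  alpha = 2 eta,    h(u) = Psi^r(u^2),
     near 2^-r  :  alpha = 2^r eta,  h(u) = u Psi^r(u^(-2^r)).
   In both cases h is a "regular profile": nondecreasing, of at least power
   growth, with a first-order expansion h(u) = p + a u + O(u^2) at 0+.

   The core of the file (section LegendreExpansion) shows that for a regular
   profile, sup_u (alpha ln u - ln h(u)) = -ln p + alpha ln(alpha p/a) - alpha
   + O(alpha^2), the main term being the maximum of the linearised problem
   (attained at u = alpha p/a), and that sup_u (- ln h(u)) = -ln p.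
   Both facts are transported to suprema over xi in R. *)

From Stdlib Require Import Reals Lra Psatz Lia ClassicalEpsilon.
Open Scope R_scope.

Lemma ln_le_compat x y : 0 < x -> x <= y -> ln x <= ln y.
Proof.
 intros Hx [Hxy|Hxy]; [left; apply ln_increasing; assumption|rewrite Hxy; right; reflexivity].
Qed.

Lemma ln_le_sub1 x : 0 < x -> ln x <= x - 1.
Proof. intros Hx. pose proof (exp_ineq1_le (ln x)) as H. rewrite exp_ln in H; lra. Qed.

Lemma ln1p_ge x : 0 <= x -> x - x ^ 2 <= ln (1 + x).
Proof.
 intros Hx.
 pose proof (ln_le_sub1 (/ (1 + x)) ltac:(apply Rinv_0_lt_compat; lra)) as H.
 rewrite ln_Rinv in H by lra.
 assert (Hinv : / (1 + x) <= 1 - x + x ^ 2).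
 { apply (Rmult_le_reg_l (1 + x)); [lra|]. rewrite Rinv_r by lra. nra. }
 lra.
Qed.

(* x ln x is bounded below by -2 sqrt x (used to compare the main term with a
   fixed negative gap when alpha is small). *)
Lemma xlnx_ge x : 0 < x -> -2 * sqrt x <= x * ln x.
Proof.
 intros Hx. pose proof (sqrt_lt_R0 x Hx) as Hs.
 assert (Hx2 : x = sqrt x * sqrt x) by (symmetry; apply sqrt_sqrt; lra).
 set (s := sqrt x) in *.
 assert (Hln : ln x = 2 * ln s) by (rewrite Hx2, ln_mult by lra; ring).
 pose proof (ln_le_sub1 (/ s) ltac:(apply Rinv_0_lt_compat; lra)) as H.
 rewrite ln_Rinv in H by lra.
 assert (Hprod : s * s * (1 - / s) <= s * s * ln s) by (apply Rmult_le_compat_l; nra).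
 replace (s * s * (1 - / s)) with (s * s - s) in Hprod by (field; lra).
 rewrite Hln, Hx2. nra.
Qed.

Lemma log_linear_max al be u : 0 < al -> 0 < be -> 0 < u ->
  al * ln u - be * u <= al * ln (al / be) - al.
Proof.
 intros Hal Hbe Hu.
 assert (Hq : 0 < al / be) by (apply Rdiv_lt_0_compat; lra).
 assert (Hr : 0 < u * be / al) by (apply Rdiv_lt_0_compat; nra).
 assert (Hsplit : ln (u * be / al) = ln u - ln (al / be)).
 { replace (u * be / al) with (u * / (al / be)) by (field; lra).
   rewrite ln_mult, ln_Rinv by (try apply Rinv_0_lt_compat; lra). ring. }
 pose proof (ln_le_sub1 _ Hr) as Hle. rewrite Hsplit in Hle.
 assert (Hmul : al * (ln u - ln (al / be)) <= al * (u * be / al - 1))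
   by (apply Rmult_le_compat_l; lra).
 replace (al * (u * be / al - 1)) with (be * u - al) in Hmul by (field; lra).
 lra.
Qed.

Lemma Rsup_between (S : R -> Prop) M z0 :
  (forall z, S z -> z <= M) -> S z0 -> z0 <= Rsup S <= M.
Proof.
 intros HM Hz0. unfold Rsup.
 destruct (excluded_middle_informative _) as [Hb|Hb].
 - destruct (completeness S _ _) as [s [Hub Hleast]]; simpl.
   split; [apply Hub, Hz0|apply Hleast; exact HM].
 - exfalso. apply Hb. split; [exists M; exact HM|exists z0; exact Hz0].
Qed.

Lemma Rsup_range_bounds (f G tau : R -> R) m M :
  (forall xi, 0 < tau xi) -> (forall u, 0 < u -> exists xi, tau xi = u) ->
  (forall xi, f xi = G (tau xi)) ->
  (forall u, 0 < u -> G u <= M) -> (exists u, 0 < u /\ m <= G u) ->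
  m <= Rsup (fun z => exists xi, z = f xi) <= M.
Proof.
 intros Htau Honto Hf HM [u [Hu Hm]].
 destruct (Honto u Hu) as [xi0 Hxi0].
 assert (Hbound : forall z, (exists xi, z = f xi) -> z <= M).
 { intros z [xi ->]. rewrite Hf. apply HM, Htau. }
 assert (Hin : exists xi, f xi0 = f xi) by (exists xi0; reflexivity).
 pose proof (Rsup_between _ M _ Hbound Hin) as [Hlo Hup].
 rewrite Hf, Hxi0 in Hlo. lra.
Qed.

Lemma exp_div_onto c : c <> 0 -> forall u, 0 < u -> exists xi, exp (xi / c) = u.
Proof.
 intros Hc u Hu. exists (c * ln u).
 replace (c * ln u / c) with (ln u) by (field; exact Hc). apply exp_ln, Hu.
Qed.

Definition regular_profile (h : R -> R) (p a : R) : Prop :=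
  0 < p /\ 0 < a /\
  (exists d, 0 <= d /\ forall u, 0 < u <= 1 ->
     p + a * u - d * u ^ 2 <= h u <= p + a * u + d * u ^ 2) /\
  (forall u v, 0 < u -> u <= v -> h u <= h v) /\
  (exists ka C, 0 < ka /\ forall u, 0 < u -> ka * ln u - C <= ln (h u)).

(* The supremum of the linearised problem  al ln u - ln p - (a/p) u. *)
Definition legendre_main (p a al : R) : R := - ln p + al * ln (al * p / a) - al.

Section LegendreExpansion.

Variables (h : R -> R) (p a d ka C : R).
Hypothesis p_pos : 0 < p.
Hypothesis a_pos : 0 < a.
Hypothesis d_nonneg : 0 <= d.
Hypothesis ka_pos : 0 < ka.
Hypothesis h_taylor : forall u, 0 < u <= 1 ->
  p + a * u - d * u ^ 2 <= h u <= p + a * u + d * u ^ 2.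
Hypothesis h_mono : forall u v, 0 < u -> u <= v -> h u <= h v.
Hypothesis h_growth : forall u, 0 < u -> ka * ln u - C <= ln (h u).

(* Slope of ln h at 0+, curvature constant of its lower bound, and the range
   [0, u1] on which ln h(u) >= ln p + B u / 2. *)
Let B := a / p.
Let c := d / p + B ^ 2.
Let u1 := Rmin 1 (B / (2 * c)).
(* Threshold u <= lam al separating the near-optimal from the medium range. *)
Let lam := 16 / B.
(* The gap ln h(u) - ln p on [u1, oo) is at least m. *)
Let m := B / 2 * u1.
(* Beyond ln u = L the growth of h dominates al ln u. *)
Let L := Rmax 0 (2 * (C + ln p + m) / ka).
Let K := c * lam ^ 2.

Lemma B_pos : 0 < B.
Proof. apply Rdiv_lt_0_compat; assumption. Qed.

Lemma dp_nonneg : 0 <= d / p.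
Proof. apply Rmult_le_pos; [|apply Rlt_le, Rinv_0_lt_compat]; assumption. Qed.

Lemma c_pos : 0 < c.
Proof. pose proof B_pos; pose proof dp_nonneg. unfold c. nra. Qed.

Lemma u1_pos : 0 < u1.
Proof. pose proof B_pos; pose proof c_pos. apply Rmin_pos; [lra|apply Rdiv_lt_0_compat; lra]. Qed.

Lemma m_pos : 0 < m.
Proof. pose proof B_pos; pose proof u1_pos. unfold m. nra. Qed.

Lemma u1_small u : 0 < u <= u1 -> u <= 1 /\ c * u <= B / 2.
Proof.
 intros [Hu Hu1]. pose proof c_pos.
 split; [apply (Rle_trans _ _ _ Hu1), Rmin_l|].
 assert (Hle : u <= B / (2 * c)) by (apply (Rle_trans _ _ _ Hu1), Rmin_r).
 apply (Rmult_le_compat_l c) in Hle; [|lra].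
 replace (c * (B / (2 * c))) with (B / 2) in Hle by (field; lra). exact Hle.
Qed.

Lemma h_ge_p u : 0 < u -> p <= h u.
Proof.
 intros Hu. set (v := Rmin u (Rmin 1 (a / (d + 1)))).
 assert (Hv : 0 < v) by (apply Rmin_pos; [lra|apply Rmin_pos; [lra|apply Rdiv_lt_0_compat; lra]]).
 assert (Hvu : v <= u) by apply Rmin_l.
 assert (Hv1 : v <= 1) by (apply (Rle_trans _ _ _ (Rmin_r _ _)), Rmin_l).
 assert (Hva : v * (d + 1) <= a).
 { assert (Hle : v <= a / (d + 1)) by (apply (Rle_trans _ _ _ (Rmin_r _ _)), Rmin_r).
   apply (Rmult_le_compat_r (d + 1)) in Hle; [|lra].
   replace (a / (d + 1) * (d + 1)) with a in Hle by (field; lra). exact Hle. }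
 destruct (h_taylor v (conj Hv Hv1)) as [Hlo _].
 pose proof (h_mono v u Hv Hvu). nra.
Qed.

Lemma ln_h_near0 u : 0 < u <= u1 -> ln p + B * u - c * u ^ 2 <= ln (h u).
Proof.
 intros Hu. destruct (u1_small u Hu) as [Hu1 Hcu]. pose proof B_pos as HB.
 pose proof dp_nonneg as Hdp.
 set (x := B * u - d / p * u ^ 2).
 assert (Hx0 : 0 <= x).
 { unfold x, c in *. assert (d / p * u <= B) by nra. nra. }
 assert (HxB : x <= B * u) by (unfold x; nra).
 assert (Hhx : p * (1 + x) <= h u).
 { destruct (h_taylor u ltac:(lra)) as [Hlo _].
   replace (p * (1 + x)) with (p + a * u - d * u ^ 2) by (unfold x, B; field; lra). exact Hlo. }
 apply ln_le_compat in Hhx; [|nra].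
 rewrite ln_mult in Hhx by lra.
 pose proof (ln1p_ge x Hx0) as Hlog.
 assert (x ^ 2 <= B ^ 2 * u ^ 2) by nra.
 unfold x, c in *. lra.
Qed.

Lemma ln_h_near0_half u : 0 < u <= u1 -> ln p + B / 2 * u <= ln (h u).
Proof.
 intros Hu. pose proof (ln_h_near0 u Hu). destruct (u1_small u Hu) as [_ Hcu]. nra.
Qed.

Lemma ln_h_far u : u1 <= u -> ln p + m <= ln (h u).
Proof.
 intros Hu. pose proof u1_pos.
 pose proof (ln_h_near0_half u1 ltac:(lra)).
 assert (ln (h u1) <= ln (h u)).
 { apply ln_le_compat; [pose proof (h_ge_p u1); lra|apply h_mono; lra]. }
 unfold m. lra.
Qed.

(* For u in (0, lam al], the quadratic error term is O(al^2) and the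
   linearised problem gives the main term. *)
Lemma upper_small al u : 0 < al -> 0 < u -> u <= lam * al <= u1 ->
  al * ln u - ln (h u) <= legendre_main p a al + K * al ^ 2.
Proof.
 intros Hal Hu [Hul Hlam]. pose proof B_pos; pose proof c_pos.
 pose proof (ln_h_near0 u ltac:(lra)) as Hlow.
 pose proof (log_linear_max al B u Hal B_pos Hu) as Hmax.
 assert (Hsq : c * u ^ 2 <= K * al ^ 2).
 { unfold K. replace (c * lam ^ 2 * al ^ 2) with (c * (lam * al) ^ 2) by ring.
   apply Rmult_le_compat_l; [lra|]. apply pow_incr; lra. }
 unfold legendre_main. replace (al * p / a) with (al / B) by (unfold B; field; lra).
 lra.
Qed.

Lemma upper_medium al u : 0 < al -> lam * al <= u <= u1 ->
  al * ln u - ln (h u) <= legendre_main p a al.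
Proof.
 intros Hal [Hlu Hu1]. pose proof B_pos.
 assert (Hlam : lam * al = 16 * (al / B)) by (unfold lam; field; lra).
 assert (Hu : 0 < u) by (assert (0 < al / B) by (apply Rdiv_lt_0_compat; lra); lra).
 pose proof (ln_h_near0_half u ltac:(lra)) as Hlow.
 pose proof (log_linear_max al (B / 4) u Hal ltac:(lra) Hu) as Hmax.
 assert (Hsplit : ln (al / (B / 4)) = ln (al / B) + ln 4).
 { rewrite <- ln_mult by (try apply Rdiv_lt_0_compat; lra). f_equal. field; lra. }
 pose proof (ln_le_sub1 4 ltac:(lra)) as Hln4.
 assert (Hgap : B / 4 * u >= 4 * al).
 { assert (B / 4 * (lam * al) = 4 * al) by (unfold lam; field; lra). nra. }
 unfold legendre_main. replace (al * p / a) with (al / B) by (unfold B; field; lra).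
 nra.
Qed.

Lemma upper_far al u : 0 < al -> al <= ka / 2 -> al * L <= m / 2 -> u1 <= u ->
  al * ln u - ln (h u) <= - ln p - m / 2.
Proof.
 intros Hal Hka HL Hu. pose proof u1_pos.
 pose proof (ln_h_far u Hu) as Hfar.
 assert (HL0 : 0 <= L) by apply Rmax_l.
 destruct (Rle_lt_dec (ln u) L) as [Hsmall|Hlarge].
 - assert (al * ln u <= al * L) by (apply Rmult_le_compat_l; lra). lra.
 - assert (HkaL : 2 * (C + ln p + m) <= ka * L).
   { pose proof (Rmax_r 0 (2 * (C + ln p + m) / ka)) as Hr. fold L in Hr.
     apply (Rmult_le_compat_l ka) in Hr; [|lra].
     replace (ka * (2 * (C + ln p + m) / ka)) with (2 * (C + ln p + m)) in Hr by (field; lra).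
     exact Hr. }
   pose proof (h_growth u ltac:(lra)).
   assert (al * ln u <= ka / 2 * ln u) by (apply Rmult_le_compat_r; lra).
   assert (ka / 2 * L <= ka / 2 * ln u) by (apply Rmult_le_compat_l; lra).
   pose proof m_pos. lra.
Qed.

Lemma main_above_gap al : 0 < al -> al <= m / 4 -> al / B <= (m / (8 * B)) ^ 2 ->
  - ln p - m / 2 <= legendre_main p a al.
Proof.
 intros Hal Hm4 Hsq. pose proof B_pos. pose proof m_pos as Hm.
 assert (Hx : 0 < al / B) by (apply Rdiv_lt_0_compat; lra).
 pose proof (xlnx_ge (al / B) Hx) as Hxl.
 assert (Hsqrt : sqrt (al / B) <= m / (8 * B)).
 { rewrite <- (sqrt_pow2 (m / (8 * B))) by (apply Rlt_le, Rdiv_lt_0_compat; lra).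
   apply sqrt_le_1_alt, Hsq. }
 assert (Hrel : al * ln (al / B) = B * (al / B * ln (al / B))) by (field; lra).
 assert (HBm : B * (m / (8 * B)) = m / 8) by (field; lra).
 unfold legendre_main. replace (al * p / a) with (al / B) by (unfold B; field; lra).
 nra.
Qed.

Lemma lower_at_optimum al : 0 < al <= B ->
  legendre_main p a al - K * al ^ 2 <= al * ln (al / B) - ln (h (al / B)).
Proof.
 intros [Hal HalB]. pose proof B_pos; pose proof c_pos.
 set (u := al / B).
 assert (Hu : 0 < u <= 1).
 { unfold u. split; [apply Rdiv_lt_0_compat; lra|].
   apply (Rmult_le_reg_r B); [lra|]. unfold Rdiv. rewrite Rmult_assoc, Rinv_l by lra. lra. }
 destruct (h_taylor u Hu) as [_ Hup].
 pose proof dp_nonneg as Hdp.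
 set (y := al + d / p * u ^ 2).
 assert (Hfact : p + a * u + d * u ^ 2 = p * (1 + y)) by (unfold y, u, B; field; lra).
 assert (Hy : 0 <= y) by (unfold y; nra).
 assert (Hln : ln (h u) <= ln p + y).
 { pose proof (h_ge_p u (proj1 Hu)).
   apply (Rle_trans _ (ln (p * (1 + y)))); [apply ln_le_compat; lra|].
   rewrite ln_mult by lra. pose proof (ln_le_sub1 (1 + y)); lra. }
 assert (Herr : d / p * u ^ 2 <= K * al ^ 2).
 { unfold K. replace (c * lam ^ 2 * al ^ 2) with (c * (16 * u) ^ 2) by (unfold u, lam; field; lra).
   assert (d / p <= c) by (unfold c; nra). nra. }
 unfold legendre_main. replace (al * p / a) with u by (unfold u, B; field; lra).
 unfold y in Hln. lra.
Qed.

Lemma upper_bound al : 0 < al -> lam * al <= u1 -> al <= ka / 2 -> al * L <= m / 2 ->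
  al <= m / 4 -> al / B <= (m / (8 * B)) ^ 2 ->
  forall u, 0 < u -> al * ln u - ln (h u) <= legendre_main p a al + K * al ^ 2.
Proof.
 intros Hal Hlam Hka HL Hm4 Hsq u Hu.
 assert (HK : 0 <= K * al ^ 2) by (pose proof c_pos; unfold K; apply Rmult_le_pos; [apply Rmult_le_pos|]; nra).
 destruct (Rle_lt_dec u (lam * al)) as [Hsmall|Hbig].
 - apply upper_small; lra.
 - destruct (Rle_lt_dec u u1) as [Hmid|Hfar].
   + pose proof (upper_medium al u Hal ltac:(lra)). lra.
   + pose proof (upper_far al u Hal Hka HL ltac:(lra)).
     pose proof (main_above_gap al Hal Hm4 Hsq). lra.
Qed.

Theorem legendre_expansion : exists K' delta, 0 < delta /\ forall al, 0 < al < delta ->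
  (forall u, 0 < u -> al * ln u - ln (h u) <= legendre_main p a al + K' * al ^ 2) /\
  (exists u, 0 < u /\ legendre_main p a al - K' * al ^ 2 <= al * ln u - ln (h u)).
Proof.
 pose proof B_pos; pose proof u1_pos.
 pose proof m_pos as Hm.
 assert (Hlam : 0 < lam) by (unfold lam; apply Rdiv_lt_0_compat; lra).
 assert (HL : 0 <= L) by apply Rmax_l.
 exists K, (Rmin (Rmin (u1 / lam) B)
          (Rmin (Rmin (ka / 2) (m / (2 * (L + 1)))) (Rmin (m / 4) (B * (m / (8 * B)) ^ 2)))).
 split.
 { repeat apply Rmin_pos; try apply Rdiv_lt_0_compat; try lra.
   apply Rmult_lt_0_compat; [lra|]. apply pow_lt, Rdiv_lt_0_compat; lra. }
 intros al [Hal Hde].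
 apply Rmin_Rgt in Hde as [[Hu1 HB]%Rmin_Rgt [[Hka HmL]%Rmin_Rgt [Hm4 Hsq]%Rmin_Rgt]%Rmin_Rgt].
 split.
 - apply upper_bound; try lra.
   + apply (Rmult_lt_compat_l lam) in Hu1; [|lra].
     replace (lam * (u1 / lam)) with u1 in Hu1 by (field; lra). lra.
   + apply (Rmult_lt_compat_r (2 * (L + 1))) in HmL; [|lra].
     replace (m / (2 * (L + 1)) * (2 * (L + 1))) with m in HmL by (field; lra). nra.
   + apply (Rmult_lt_compat_r (/ B)) in Hsq; [|apply Rinv_0_lt_compat; lra].
     replace (B * (m / (8 * B)) ^ 2 * / B) with ((m / (8 * B)) ^ 2) in Hsq by (field; lra).
     unfold Rdiv at 1. lra.
 - exists (al / B). split; [apply Rdiv_lt_0_compat; lra|].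
   apply lower_at_optimum; lra.
Qed.

Lemma ln_h_approaches eps : 0 < eps -> exists u, 0 < u /\ ln (h u) <= ln p + eps.
Proof.
 intros Heps. set (u := Rmin 1 (eps * p / (a + d))).
 assert (Hu : 0 < u) by (apply Rmin_pos; [lra|apply Rdiv_lt_0_compat; nra]).
 assert (Hu1 : u <= 1) by apply Rmin_l.
 assert (Hue : (a + d) * u / p <= eps).
 { assert (Hle : u <= eps * p / (a + d)) by apply Rmin_r.
   apply (Rmult_le_compat_l ((a + d) / p)) in Hle; [|apply Rmult_le_pos; [lra|apply Rlt_le, Rinv_0_lt_compat; lra]].
   replace ((a + d) / p * (eps * p / (a + d))) with eps in Hle by (field; lra).
   replace ((a + d) * u / p) with ((a + d) / p * u) by (field; lra). exact Hle. }
 exists u. split; [exact Hu|].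
 destruct (h_taylor u (conj Hu Hu1)) as [_ Hup].
 assert (Hfact : p * (1 + (a + d) * u / p) = p + (a + d) * u) by (field; lra).
 assert (Hy : 0 <= (a + d) * u / p) by (apply Rmult_le_pos; [nra|apply Rlt_le, Rinv_0_lt_compat; lra]).
 apply (Rle_trans _ (ln (p * (1 + (a + d) * u / p)))).
 - apply ln_le_compat; [pose proof (h_ge_p u Hu); lra|]. rewrite Hfact. assert (u ^ 2 <= u) by nra. nra.
 - rewrite ln_mult by lra. pose proof (ln_le_sub1 (1 + (a + d) * u / p)). lra.
Qed.

End LegendreExpansion.

Lemma Rsup_legendre_expansion (h : R -> R) p a (f : R -> R -> R) (tau : R -> R) s :
  regular_profile h p a -> 0 < s ->
  (forall xi, 0 < tau xi) -> (forall u, 0 < u -> exists xi, tau xi = u) ->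
  (forall eta xi, f eta xi = s * eta * ln (tau xi) - ln (h (tau xi))) ->
  exists K delta, 0 < delta /\ forall eta, 0 < eta < delta ->
    Rabs (Rsup (fun z => exists xi, z = f eta xi) - legendre_main p a (s * eta)) <= K * eta ^ 2.
Proof.
 intros [Hp [Ha [[d [Hd Ht]] [Hmono [ka [C [Hka Hg]]]]]]] Hs Htau Honto Hf.
 destruct (legendre_expansion h p a d ka C Hp Ha Hd Hka Ht Hmono Hg) as [K [de [Hde Hexp]]].
 exists (K * s ^ 2), (de / s). split; [apply Rdiv_lt_0_compat; lra|].
 intros eta [Heta Hlt].
 assert (Hal : 0 < s * eta < de).
 { split; [nra|]. apply (Rmult_lt_compat_l s) in Hlt; [|lra].
   replace (s * (de / s)) with de in Hlt by (field; lra). exact Hlt. }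
 destruct (Hexp (s * eta) Hal) as [Hup Hlo].
 replace (K * s ^ 2 * eta ^ 2) with (K * (s * eta) ^ 2) by ring.
 apply Rabs_le.
 assert (Hb := Rsup_range_bounds (f eta) (fun u => s * eta * ln u - ln (h u)) tau _ _
                 Htau Honto (Hf eta) Hup Hlo).
 lra.
Qed.

Lemma Rsup_at_endpoint (h : R -> R) p a (f tau : R -> R) :
  regular_profile h p a ->
  (forall xi, 0 < tau xi) -> (forall u, 0 < u -> exists xi, tau xi = u) ->
  (forall xi, f xi = - ln (h (tau xi))) ->
  Rsup (fun z => exists xi, z = f xi) = - ln p.
Proof.
 intros [Hp [Ha [[d [Hd Ht]] [Hmono _]]]] Htau Honto Hf.
 assert (Hup : forall u, 0 < u -> - ln (h u) <= - ln p).
 { intros u Hu. assert (p <= h u) by (apply (h_ge_p h p a d); assumption).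
   assert (ln p <= ln (h u)) by (apply ln_le_compat; lra). lra. }
 apply Rle_antisym.
 - apply (Rsup_range_bounds f (fun u => - ln (h u)) tau (- ln (h 1))); auto.
   exists 1. split; lra.
 - apply Rle_plus_epsilon. intros eps Heps.
   assert (Happ : exists u, 0 < u /\ ln (h u) <= ln p + eps) by (apply (ln_h_approaches h p a d); assumption).
   destruct Happ as [u [Hu Hln]].
   assert (Hb : - ln p - eps <= Rsup (fun z => exists xi, z = f xi) <= - ln p).
   { apply (Rsup_range_bounds f (fun u => - ln (h u)) tau); auto.
     exists u. split; [exact Hu|lra]. }
   lra.
Qed.

Lemma Psi_ge_half X : 1 / 2 <= Psi X.
Proof. unfold Psi. pose proof (sqrt_pos X). lra. Qed.

Lemma Psi_mono X Y : X <= Y -> Psi X <= Psi Y.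
Proof. intros H. unfold Psi. pose proof (sqrt_le_1_alt X Y H). lra. Qed.

Lemma iter_Psi_mono k X Y : X <= Y -> iter_fun k Psi X <= iter_fun k Psi Y.
Proof. induction k as [|k IH]; simpl; intros H; [exact H|apply Psi_mono, IH, H]. Qed.

Lemma iter_Psi_pos k X : 0 < X -> 0 < iter_fun k Psi X.
Proof. destruct k; simpl; intros H; [exact H|pose proof (Psi_ge_half (iter_fun k Psi X)); lra]. Qed.

Lemma phi_ln_Psi x : phi x = ln (Psi (exp x)).
Proof.
 unfold phi, Psi, cosh.
 assert (Esqrt : sqrt (exp x) = exp (x / 4) * exp (x / 4)).
 { rewrite <- exp_plus. replace x with (x / 2 + x / 2) at 1 by field.
   rewrite exp_plus, sqrt_square by (left; apply exp_pos). f_equal; field. }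
 assert (Einv : exp (x / 4) * exp (- (x / 4)) = 1).
 { rewrite <- exp_plus. replace (x / 4 + - (x / 4)) with 0 by ring. apply exp_0. }
 pose proof (exp_pos (x / 4)). pose proof (exp_pos (- (x / 4))).
 rewrite Esqrt. pattern (x / 4) at 1. rewrite <- (ln_exp (x / 4)).
 rewrite <- ln_mult by lra. f_equal.
 replace (exp (x / 4) * ((exp (x / 4) + exp (- (x / 4))) / 2))
   with ((exp (x / 4) * exp (x / 4) + exp (x / 4) * exp (- (x / 4))) / 2) by field.
 rewrite Einv. reflexivity.
Qed.

Lemma iter_phi_ln_Psi k x : iter_fun k phi x = ln (iter_fun k Psi (exp x)).
Proof.
 induction k as [|k IH]; simpl; [symmetry; apply ln_exp|].
 rewrite IH, phi_ln_Psi, exp_ln; [reflexivity|apply iter_Psi_pos, exp_pos].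
Qed.

(* Psi^k grows at least like a power: Psi(X) >= sqrt X / 2. *)
Lemma iter_Psi_growth k : exists ka C, 0 < ka /\ forall X, 0 < X ->
  ka * ln X - C <= ln (iter_fun k Psi X).
Proof.
 induction k as [|k [ka [C [Hka IH]]]].
 - exists 1, 0. split; [lra|]. intros X _. simpl. lra.
 - exists (ka / 2), (C / 2 + ln 2). split; [lra|]. intros X HX. simpl.
   set (Y := iter_fun k Psi X). assert (HY : 0 < Y) by (apply iter_Psi_pos, HX).
   pose proof (IH X HX) as HXY. fold Y in HXY.
   assert (Hs : 0 < sqrt Y) by (apply sqrt_lt_R0, HY).
   assert (HlnY : ln Y = 2 * ln (sqrt Y)).
   { rewrite <- (sqrt_sqrt Y) at 1 by lra. rewrite ln_mult by lra. ring. }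
   assert (Hhalf : ln (sqrt Y / 2) <= ln (Psi Y)) by (apply ln_le_compat; unfold Psi; lra).
   unfold Rdiv in Hhalf. rewrite ln_mult, ln_Rinv in Hhalf by lra. lra.
Qed.

Lemma sqrt_taylor P F : 0 < P -> 0 <= F ->
  0 <= sqrt P + (F - P) / (2 * sqrt P) - sqrt F <= (F - P) ^ 2 / (2 * sqrt P ^ 3).
Proof.
 intros HP HF.
 pose proof (sqrt_lt_R0 P HP) as Hs. pose proof (sqrt_pos F) as Ht.
 assert (Hss : sqrt P * sqrt P = P) by (apply sqrt_sqrt; lra).
 assert (Htt : sqrt F * sqrt F = F) by (apply sqrt_sqrt; lra).
 replace (F - P) with (sqrt F * sqrt F - sqrt P * sqrt P) by lra.
 set (s := sqrt P) in *. set (t := sqrt F) in *.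
 replace (s + (t * t - s * s) / (2 * s) - t) with ((t - s) ^ 2 / (2 * s)) by (field; lra).
 split; [apply Rmult_le_pos; [apply pow2_ge_0|apply Rlt_le, Rinv_0_lt_compat; lra]|].
 replace ((t * t - s * s) ^ 2 / (2 * s ^ 3)) with ((t - s) ^ 2 * ((t + s) / s) ^ 2 / (2 * s))
   by (field; lra).
 apply Rmult_le_compat_r; [apply Rlt_le, Rinv_0_lt_compat; lra|].
 assert (Hge : 1 <= (t + s) / s).
 { apply (Rmult_le_reg_r s); [lra|]. unfold Rdiv. rewrite Rmult_assoc, Rinv_l by lra. lra. }
 assert (Hsq : 1 <= ((t + s) / s) ^ 2) by nra.
 pose proof (pow2_ge_0 (t - s)). nra.
Qed.

Lemma Psi_taylor_step P F a d u : 0 < P -> 0 <= F -> 0 < u <= 1 -> 0 <= a -> 0 <= d ->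
  P + a * u - d * u ^ 2 <= F <= P + a * u + d * u ^ 2 ->
  Psi P + a / (4 * sqrt P) * u - (d / (4 * sqrt P) + (a + d) ^ 2 / (4 * sqrt P ^ 3)) * u ^ 2
  <= Psi F <=
  Psi P + a / (4 * sqrt P) * u + (d / (4 * sqrt P) + (a + d) ^ 2 / (4 * sqrt P ^ 3)) * u ^ 2.
Proof.
 intros HP HF Hu Ha Hd [Hlo Hhi]. unfold Psi.
 pose proof (sqrt_taylor P F HP HF) as [E0 E1].
 pose proof (sqrt_lt_R0 P HP) as Hs. set (s := sqrt P) in *.
 assert (Hdev : (F - P) ^ 2 <= (a + d) ^ 2 * u ^ 2).
 { assert (Hb1 : F - P <= (a + d) * u) by nra.
   assert (Hb2 : - ((a + d) * u) <= F - P) by nra. nra. }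
 assert (Herr : (F - P) ^ 2 / (2 * s ^ 3) <= 2 * ((a + d) ^ 2 / (4 * s ^ 3) * u ^ 2)).
 { replace (2 * ((a + d) ^ 2 / (4 * s ^ 3) * u ^ 2)) with ((a + d) ^ 2 * u ^ 2 / (2 * s ^ 3)) by (field; lra).
   apply Rmult_le_compat_r; [apply Rlt_le, Rinv_0_lt_compat, Rmult_lt_0_compat; [lra|apply pow_lt, Hs]|exact Hdev]. }
 set (i := / (4 * s)). assert (Hi : 0 < i) by (apply Rinv_0_lt_compat; lra).
 assert (Hlin : (F - P) / (2 * s) = 2 * (a * i * u + (F - P - a * u) * i)) by (unfold i; field; lra).
 assert (Hrest : - (d * i * u ^ 2) <= (F - P - a * u) * i <= d * i * u ^ 2) by (split; nra).
 replace (a / (4 * s)) with (a * i) by (unfold i; field; lra).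
 replace (d / (4 * s)) with (d * i) by (unfold i; field; lra).
 lra.
Qed.

(* Slope at 0+ of u |-> Psi^(n+1)(u^2). *)
Fixpoint zero_slope (n : nat) : R :=
  match n with
  | O => / 2
  | S n' => zero_slope n' / (4 * sqrt (iter_fun (S n') Psi 0))
  end.

Lemma iter_Psi_S_ge_half n X : 1 / 2 <= iter_fun (S n) Psi X.
Proof. apply Psi_ge_half. Qed.

Lemma zero_slope_pos n : 0 < zero_slope n.
Proof.
 induction n as [|n IH]; simpl; [lra|].
 pose proof (iter_Psi_S_ge_half n 0) as Hp. simpl in Hp.
 apply Rdiv_lt_0_compat; [exact IH|]. pose proof (sqrt_lt_R0 (Psi (iter_fun n Psi 0))). lra.
Qed.

Lemma zero_profile_taylor n : exists d, 0 <= d /\ forall u, 0 < u <= 1 ->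
  iter_fun (S n) Psi 0 + zero_slope n * u - d * u ^ 2 <= iter_fun (S n) Psi (u ^ 2)
  <= iter_fun (S n) Psi 0 + zero_slope n * u + d * u ^ 2.
Proof.
 induction n as [|n [d [Hd IH]]].
 - exists 0. split; [lra|]. intros u Hu. cbn [iter_fun zero_slope]. unfold Psi.
   rewrite sqrt_pow2, sqrt_0 by lra. lra.
 - set (P := iter_fun (S n) Psi 0).
   pose proof (iter_Psi_S_ge_half n 0) as HP. fold P in HP.
   pose proof (sqrt_lt_R0 P ltac:(lra)) as Hs.
   pose proof (zero_slope_pos n) as Ha.
   exists (d / (4 * sqrt P) + (zero_slope n + d) ^ 2 / (4 * sqrt P ^ 3)). split.
   + assert (0 <= d / (4 * sqrt P)) by (apply Rmult_le_pos; [lra|apply Rlt_le, Rinv_0_lt_compat; lra]).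
     assert (0 <= (zero_slope n + d) ^ 2 / (4 * sqrt P ^ 3)).
     { apply Rmult_le_pos; [apply pow2_ge_0|apply Rlt_le, Rinv_0_lt_compat, Rmult_lt_0_compat; [lra|apply pow_lt, Hs]]. }
     lra.
   + intros u Hu. apply (Psi_taylor_step P (iter_fun (S n) Psi (u ^ 2))); try lra; [|apply IH, Hu].
     pose proof (iter_Psi_S_ge_half n (u ^ 2)). lra.
Qed.

Lemma prod_Psi_pos k : 0 < prod_Psi k.
Proof.
 induction k as [|k IH]; cbn [prod_Psi]; [lra|].
 apply Rmult_lt_0_compat; [exact IH|]. pose proof (iter_Psi_S_ge_half k 0); lra.
Qed.

Lemma zero_slope_product n : 2 * iter_fun (S n) Psi 0 =
  zero_slope n * 4 ^ S n * sqrt (iter_fun (S n) Psi 0 * prod_Psi (S n)).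
Proof.
 induction n as [|n IH].
 - simpl. unfold Psi. rewrite sqrt_0.
   replace ((0 + 1) / 2 * (1 * ((0 + 1) / 2))) with (/ 2 * / 2) by field.
   rewrite sqrt_square by lra. field.
 - change (prod_Psi (S (S n))) with (prod_Psi (S n) * iter_fun (S (S n)) Psi 0).
   change (zero_slope (S n)) with (zero_slope n / (4 * sqrt (iter_fun (S n) Psi 0))).
   change (4 ^ S (S n)) with (4 * 4 ^ S n).
   set (P' := iter_fun (S (S n)) Psi 0). set (P := iter_fun (S n) Psi 0) in *.
   set (Q := prod_Psi (S n)) in *.
   assert (HP : 1 / 2 <= P) by apply iter_Psi_S_ge_half.
   assert (HP' : 1 / 2 <= P') by apply iter_Psi_S_ge_half.
   assert (HQ : 0 < Q) by apply prod_Psi_pos.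
   pose proof (sqrt_lt_R0 P ltac:(lra)) as Hs.
   rewrite sqrt_mult in IH by lra.
   replace (P' * (Q * P')) with (P' * P' * Q) by ring.
   rewrite sqrt_mult, sqrt_square by nra.
   assert (Hss : sqrt P * sqrt P = P) by (apply sqrt_sqrt; lra).
   replace (zero_slope n / (4 * sqrt P) * (4 * 4 ^ S n) * (P' * sqrt Q))
     with (P' * (zero_slope n * 4 ^ S n * (sqrt P * sqrt Q)) / (sqrt P * sqrt P)) by (field; lra).
   rewrite <- IH, Hss. field. lra.
Qed.

Lemma zero_profile_regular n :
  regular_profile (fun u => iter_fun (S n) Psi (u ^ 2)) (iter_fun (S n) Psi 0) (zero_slope n).
Proof.
 split; [pose proof (iter_Psi_S_ge_half n 0); lra|].
 split; [apply zero_slope_pos|].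
 split; [apply zero_profile_taylor|].
 split.
 - intros u v Hu Huv. apply iter_Psi_mono. apply pow_incr. lra.
 - destruct (iter_Psi_growth (S n)) as [ka [C [Hka Hg]]].
   exists (2 * ka), C. split; [lra|]. intros u Hu.
   pose proof (Hg (u ^ 2) ltac:(apply pow_lt, Hu)) as H.
   rewrite ln_pow in H by exact Hu. simpl INR in H. lra.
Qed.

Fixpoint top_profile (n : nat) (v : R) : R :=
  match n with
  | O => (1 + v) / 2
  | S n' => (sqrt (top_profile n' (v ^ 2)) + v) / 2
  end.

(* Its value at 0+. *)
Fixpoint top_value (n : nat) : R :=
  match n with
  | O => / 2
  | S n' => sqrt (top_value n') / 2
  end.

Lemma top_profile_eq n v : 0 < v -> top_profile n v = v * iter_fun (S n) Psi ((/ v) ^ (2 ^ S n)).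
Proof.
 revert v. induction n as [|n IH]; intros v Hv.
 - simpl. unfold Psi. rewrite Rmult_1_r, sqrt_square by (apply Rlt_le, Rinv_0_lt_compat, Hv).
   field. lra.
 - change (top_profile (S n) v) with ((sqrt (top_profile n (v ^ 2)) + v) / 2).
   rewrite IH by (apply pow_lt, Hv).
   change (iter_fun (S (S n)) Psi ((/ v) ^ (2 ^ S (S n))))
     with (Psi (iter_fun (S n) Psi ((/ v) ^ (2 ^ S (S n))))).
   replace ((/ v) ^ (2 ^ S (S n))) with ((/ v ^ 2) ^ (2 ^ S n)).
   2:{ rewrite (Nat.pow_succ_r' 2 (S n)), pow_mult. f_equal. field. lra. }
   set (Y := iter_fun (S n) Psi ((/ v ^ 2) ^ (2 ^ S n))).
   assert (HY : 0 < Y) by (apply iter_Psi_pos, pow_lt, Rinv_0_lt_compat, pow_lt, Hv).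
   rewrite sqrt_mult by (try apply pow2_ge_0; lra). rewrite sqrt_pow2 by lra.
   unfold Psi. field.
Qed.

Lemma top_value_pos n : 0 < top_value n.
Proof.
 induction n as [|n IH]; simpl; [lra|]. pose proof (sqrt_lt_R0 _ IH). lra.
Qed.

Lemma top_profile_lower n v : top_value n + v / 2 <= top_profile n v.
Proof.
 revert v. induction n as [|n IH]; intros v; cbn [top_profile top_value]; [lra|].
 pose proof (IH (v ^ 2)). pose proof (pow2_ge_0 v).
 assert (sqrt (top_value n) <= sqrt (top_profile n (v ^ 2))) by (apply sqrt_le_1_alt; lra).
 lra.
Qed.

Lemma top_profile_mono n u v : 0 <= u -> u <= v -> top_profile n u <= top_profile n v.
Proof.
 revert u v. induction n as [|n IH]; intros u v Hu Huv; cbn [top_profile]; [lra|].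
 assert (top_profile n (u ^ 2) <= top_profile n (v ^ 2)) by (apply IH; [apply pow2_ge_0|apply pow_incr; lra]).
 pose proof (sqrt_le_1_alt _ _ H). lra.
Qed.

(* Second-order upper bound, by concavity of the square root at top_value n. *)
Lemma top_profile_taylor n : exists d, 0 <= d /\ forall v, 0 < v <= 1 ->
  top_profile n v <= top_value n + v / 2 + d * v ^ 2.
Proof.
 induction n as [|n [d [Hd IH]]].
 - exists 0. split; [lra|]. intros v Hv. cbn [top_profile top_value]. lra.
 - pose proof (top_value_pos n) as Hq. pose proof (sqrt_lt_R0 _ Hq) as Hs.
   exists ((1 / 2 + d) / (4 * sqrt (top_value n))).
   split; [apply Rmult_le_pos; [lra|apply Rlt_le, Rinv_0_lt_compat; lra]|].
   intros v Hv. cbn [top_profile top_value].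
   assert (Hv2 : 0 < v ^ 2 <= 1) by (split; [apply pow_lt|]; nra).
   pose proof (IH (v ^ 2) Hv2) as Hup. pose proof (top_profile_lower n (v ^ 2)) as Hlo.
   set (F := top_profile n (v ^ 2)) in *. set (q := top_value n) in *.
   assert (HF : F - q <= (1 / 2 + d) * v ^ 2).
   { assert ((v ^ 2) ^ 2 <= v ^ 2) by nra. nra. }
   pose proof (sqrt_taylor q F Hq ltac:(lra)) as [Hconc _].
   assert (Hstep : (F - q) / (2 * sqrt q) <= (1 / 2 + d) * v ^ 2 / (2 * sqrt q)).
   { apply Rmult_le_compat_r; [apply Rlt_le, Rinv_0_lt_compat; lra|exact HF]. }
   replace ((1 / 2 + d) / (4 * sqrt q) * v ^ 2) with ((1 / 2 + d) * v ^ 2 / (2 * sqrt q) / 2)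
     by (field; lra).
   lra.
Qed.

Lemma top_value_closed n : top_value n = Rpower 2 (Rpower 2 (- INR n) - 2).
Proof.
 induction n as [|n IH].
 - simpl. rewrite Ropp_0, Rpower_O by lra.
   replace (1 - 2) with (Ropp 1) by ring. rewrite Rpower_Ropp, Rpower_1 by lra. reflexivity.
 - simpl top_value. rewrite IH.
   assert (Hpos : 0 < Rpower 2 (Rpower 2 (- INR n) - 2)) by (unfold Rpower; apply exp_pos).
   rewrite <- Rpower_sqrt, Rpower_mult by exact Hpos.
   assert (Hhalf : forall y, Rpower 2 y / 2 = Rpower 2 (y + Ropp 1)).
   { intro y. rewrite Rpower_plus, Rpower_Ropp, Rpower_1 by lra. field. }
   rewrite Hhalf. f_equal.
   rewrite S_INR. replace (- (INR n + 1)) with (- INR n + Ropp 1) by ring.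
   rewrite Rpower_plus, (Rpower_Ropp 2 1), Rpower_1 by lra. field.
Qed.

Lemma top_profile_regular n : regular_profile (top_profile n) (top_value n) (/ 2).
Proof.
 pose proof (top_value_pos n) as Hq.
 split; [exact Hq|]. split; [lra|].
 split.
 - destruct (top_profile_taylor n) as [d [Hd Hup]]. exists d. split; [exact Hd|].
   intros u Hu. pose proof (top_profile_lower n u). pose proof (Hup u Hu).
   assert (0 <= d * u ^ 2) by (apply Rmult_le_pos; [lra|apply pow2_ge_0]). split; lra.
 - split; [intros u v Hu Huv; apply top_profile_mono; lra|].
   exists 1, (ln 2). split; [lra|]. intros u Hu.
   pose proof (top_profile_lower n u).
   assert (Hlog : ln (u * / 2) <= ln (top_profile n u)) by (apply ln_le_compat; lra).
   rewrite ln_mult, ln_Rinv in Hlog by lra. lra.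
Qed.

Lemma objective_near_zero n eta xi : eta * xi - iter_fun (S n) phi xi =
  2 * eta * ln (exp (xi / 2)) - ln (iter_fun (S n) Psi (exp (xi / 2) ^ 2)).
Proof.
 rewrite ln_exp, iter_phi_ln_Psi.
 replace (exp (xi / 2) ^ 2) with (exp xi) by (simpl; rewrite Rmult_1_r, <- exp_plus; f_equal; field).
 field.
Qed.

Lemma objective_near_top n eta xi : (/ 2 ^ S n - eta) * xi - iter_fun (S n) phi xi =
  2 ^ S n * eta * ln (exp (xi / - 2 ^ S n)) - ln (top_profile n (exp (xi / - 2 ^ S n))).
Proof.
 assert (H2 : 0 < 2 ^ S n) by (apply pow_lt; lra).
 set (u := exp (xi / - 2 ^ S n)). assert (Hu : 0 < u) by apply exp_pos.
 assert (Hpow : (/ u) ^ (2 ^ S n) = exp xi).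
 { unfold u. rewrite <- exp_Ropp, <- Rpower_pow by apply exp_pos.
   unfold Rpower. rewrite ln_exp, pow_INR. replace (INR 2) with 2 by (simpl; ring). f_equal. field. lra. }
 rewrite top_profile_eq, Hpow, ln_mult by (try apply iter_Psi_pos, exp_pos; exact Hu).
 unfold u. rewrite ln_exp, iter_phi_ln_Psi. field. lra.
Qed.

Lemma legendre_main_near_zero n eta : 0 < eta ->
  legendre_main (iter_fun (S n) Psi 0) (zero_slope n) (2 * eta) =
  2 * eta * ln (4 ^ S n * eta * sqrt (iter_fun (S n) Psi 0 * prod_Psi (S n)))
  - ln (iter_fun (S n) Psi 0) - 2 * eta.
Proof.
 intros Heta. pose proof (zero_slope_pos n). pose proof (zero_slope_product n) as Hrel.
 unfold legendre_main.
 replace (2 * eta * iter_fun (S n) Psi 0 / zero_slope n)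
   with (4 ^ S n * eta * sqrt (iter_fun (S n) Psi 0 * prod_Psi (S n))); [ring|].
 apply (Rmult_eq_reg_r (zero_slope n)); [|lra].
 replace (2 * eta * iter_fun (S n) Psi 0 / zero_slope n * zero_slope n)
   with (eta * (2 * iter_fun (S n) Psi 0)) by (field; lra).
 rewrite Hrel. ring.
Qed.

Lemma legendre_main_near_top n eta :
  legendre_main (top_value n) (/ 2) (2 ^ S n * eta) =
  2 ^ S n * eta * ln (Rpower 2 (INR (S n) - 1 + Rpower 2 (1 - INR (S n))) * eta)
  + (2 - Rpower 2 (1 - INR (S n))) * ln 2 - 2 ^ S n * eta.
Proof.
 rewrite top_value_closed.
 replace (1 - INR (S n)) with (- INR n) by (rewrite S_INR; ring).
 set (X := Rpower 2 (- INR n)).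
 assert (E : Rpower 2 (INR (S n) - 1 + X) = 2 ^ S n * 2 * Rpower 2 (X - 2)).
 { replace (INR (S n) - 1 + X) with (INR (S n) + 1 + (X - 2)) by ring.
   rewrite !Rpower_plus, Rpower_1, Rpower_pow by lra. reflexivity. }
 unfold legendre_main. rewrite E, ln_Rpower.
 replace (2 ^ S n * eta * Rpower 2 (X - 2) / / 2) with (2 ^ S n * 2 * Rpower 2 (X - 2) * eta) by field.
 ring.
Qed.

Lemma rate_expansion_near_zero n : exists K delta, 0 < delta /\ forall eta, 0 < eta < delta ->
  Rabs (I_rate (S n) eta -
        (2 * eta * ln (4 ^ S n * eta * sqrt (iter_fun (S n) Psi 0 * prod_Psi (S n)))
         - ln (iter_fun (S n) Psi 0) - 2 * eta)) <= K * eta ^ 2.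
Proof.
 destruct (Rsup_legendre_expansion _ _ _ (fun eta xi => eta * xi - iter_fun (S n) phi xi)
             (fun xi => exp (xi / 2)) 2 (zero_profile_regular n)) as [K [de [Hde Hexp]]].
 - lra.
 - intros xi. apply exp_pos.
 - apply exp_div_onto. lra.
 - intros eta xi. apply objective_near_zero.
 - exists K, de. split; [exact Hde|]. intros eta Heta.
   rewrite <- legendre_main_near_zero by lra. exact (Hexp eta Heta).
Qed.

Lemma rate_expansion_near_top n : exists K delta, 0 < delta /\ forall eta, 0 < eta < delta ->
  Rabs (I_rate (S n) (/ 2 ^ S n - eta) -
        (2 ^ S n * eta * ln (Rpower 2 (INR (S n) - 1 + Rpower 2 (1 - INR (S n))) * eta)
         + (2 - Rpower 2 (1 - INR (S n))) * ln 2 - 2 ^ S n * eta)) <= K * eta ^ 2.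
Proof.
 assert (H2 : 0 < 2 ^ S n) by (apply pow_lt; lra).
 destruct (Rsup_legendre_expansion _ _ _
             (fun eta xi => (/ 2 ^ S n - eta) * xi - iter_fun (S n) phi xi)
             (fun xi => exp (xi / - 2 ^ S n)) (2 ^ S n) (top_profile_regular n))
   as [K [de [Hde Hexp]]].
 - exact H2.
 - intros xi. apply exp_pos.
 - apply exp_div_onto. lra.
 - intros eta xi. apply objective_near_top.
 - exists K, de. split; [exact Hde|]. intros eta Heta.
   rewrite <- legendre_main_near_top. exact (Hexp eta Heta).
Qed.

Lemma rate_at_zero n : I_rate (S n) 0 = - ln (iter_fun (S n) Psi 0).
Proof.
 apply (Rsup_at_endpoint _ _ _ (fun xi => 0 * xi - iter_fun (S n) phi xi)
          (fun xi => exp (xi / 2)) (zero_profile_regular n)).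
 - intros xi. apply exp_pos.
 - apply exp_div_onto. lra.
 - intros xi. rewrite (objective_near_zero n 0 xi). ring.
Qed.

Lemma rate_at_top n : I_rate (S n) (/ 2 ^ S n) = (2 - Rpower 2 (1 - INR (S n))) * ln 2.
Proof.
 assert (H2 : 0 < 2 ^ S n) by (apply pow_lt; lra).
 replace ((2 - Rpower 2 (1 - INR (S n))) * ln 2) with (- ln (top_value n)).
 2:{ rewrite top_value_closed, ln_Rpower, S_INR.
     replace (1 - (INR n + 1)) with (- INR n) by ring. ring. }
 apply (Rsup_at_endpoint _ _ _ (fun xi => / 2 ^ S n * xi - iter_fun (S n) phi xi)
          (fun xi => exp (xi / - 2 ^ S n)) (top_profile_regular n)).
 - intros xi. apply exp_pos.
 - apply exp_div_onto. lra.
 - intros xi. pose proof (objective_near_top n 0 xi) as E.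
   rewrite Rminus_0_r, Rmult_0_r, Rmult_0_l in E. rewrite E. ring.
Qed.

Theorem theorem4p5 (r : nat) (hr : (1 <= r)%nat) :
  (* (1) expansion at 0+ *)
  (exists C delta : R, 0 < delta /\
     forall eta : R, 0 < eta < delta ->
       Rabs (I_rate r eta -
             (2 * eta * ln (4 ^ r * eta *
                 sqrt (iter_fun r Psi 0 * prod_Psi r))
              - ln (iter_fun r Psi 0) - 2 * eta)) <= C * eta ^ 2) /\
  (* (2) expansion at 2^{-r} - *)
  (exists C delta : R, 0 < delta /\
     forall eta : R, 0 < eta < delta ->
       Rabs (I_rate r (/ 2 ^ r - eta) -
             (2 ^ r * eta * ln (Rpower 2 (INR r - 1 + Rpower 2 (1 - INR r)) * eta)
              + (2 - Rpower 2 (1 - INR r)) * ln 2 - 2 ^ r * eta)) <= C * eta ^ 2) /\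
  (* endpoint values *)
  I_rate r 0 = - ln (iter_fun r Psi 0) /\
  I_rate r (/ 2 ^ r) = (2 - Rpower 2 (1 - INR r)) * ln 2.
Proof.
 destruct r as [|n]; [lia|].
 split; [apply rate_expansion_near_zero|].
 split; [apply rate_expansion_near_top|].
 split; [apply rate_at_zero|apply rate_at_top].
Qed.
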